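(* Let $E$ be a linear space of bounded, uniformly continuous complex-valued functions on $\mathbb{R}$ which is closed under uniform convergence on $\mathbb{R}$ and invariant under translations (if $f\in E$ then $f(\cdot+t)\in E$ for every $t\in\mathbb{R}$). Let $A:E\to E$ be a linear operator such that $\|Af\|_\infty\le a\|f\|_\infty$ for all $f\in E$ (with a constant $a\ge 0$), and suppose $A$ commutes with translations: $A\big(f(\cdot+t)\big)=(Af)(\cdot+t)$ for all $f\in E$, $t\in\mathbb{R}$. Then for every $p\in[1,+\infty)$, every $N>0$ and every $f\in E$, $$\|Af\|_{p,N}\le a\,\|f\|_{p,N}.$$
   Context: For $N>0$ and $p\in[1,\infty)$ define $\|f\|_{p,N}=\sup_{x\in\mathbb{R}}\Big(\int_{x-N}^{x+N}|f(t)|^p\,dt\Big)^{1/p}$. Also $\|f\|_\infty=\sup_{x\in\mathbb{R}}|f(x)|$. *)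

From Stdlib Require Import Reals Lra ClassicalEpsilon.
Open Scope R_scope.

Definition Cplx : Type := (R * R)%type.
Definition Cadd (z w : Cplx) : Cplx := (fst z + fst w, snd z + snd w).
Definition Csub (z w : Cplx) : Cplx := (fst z - fst w, snd z - snd w).
Definition Cmul (z w : Cplx) : Cplx :=
  (fst z * fst w - snd z * snd w, fst z * snd w + snd z * fst w).
Definition C0 : Cplx := (0, 0).
Definition Cnorm (z : Cplx) : R := sqrt (fst z * fst z + snd z * snd z).

(* Real power x^p for x >= 0, with the convention 0^p = 0 (p > 0). *)
Definition powr (x p : R) : R := if Req_EM_T x 0 then 0 else Rpower x p.

(* Riemann integral over [a,b], total: 0 when not Riemann integrable
   (never used in that case: integrands below are continuous). *)
Definition RInt_total (g : R -> R) (a b : R) : R :=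
  match excluded_middle_informative (exists pr : Riemann_integrable g a b, True) with
  | left H => RiemannInt (proj1_sig (constructive_indefinite_description _
                 (let (pr, _) := H in ex_intro (fun _ : Riemann_integrable g a b => True) pr I)))
  | right _ => 0
  end.

Definition loc_pnorm (p N : R) (f : R -> Cplx) (x : R) : R :=
  powr (RInt_total (fun t => powr (Cnorm (f t)) p) (x - N) (x + N)) (1 / p).

Definition is_pN_norm (p N : R) (f : R -> Cplx) (s : R) : Prop :=
  is_lub (fun y => exists x, y = loc_pnorm p N f x) s.
Definition is_sup_norm (f : R -> Cplx) (s : R) : Prop :=
  is_lub (fun y => exists x, y = Cnorm (f x)) s.

Definition bdd_fun (f : R -> Cplx) : Prop := exists M, forall t, Cnorm (f t) <= M.
Definition unif_cont (f : R -> Cplx) : Prop :=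
  forall eps, 0 < eps -> exists delta, 0 < delta /\
    forall s t, Rabs (s - t) < delta -> Cnorm (Csub (f s) (f t)) < eps.
Definition unif_conv (fn : nat -> R -> Cplx) (g : R -> Cplx) : Prop :=
  forall eps, 0 < eps -> exists n0, forall n, (n >= n0)%nat ->
    forall t, Cnorm (Csub (fn n t) (g t)) < eps.

From Stdlib Require Import Reals Lra Lia ClassicalEpsilon.
From Coquelicot Require Import Coquelicot.
Open Scope R_scope.

(* By uniform continuity, int_{x-N}^{x+N} |g|^p is uniformly approximated by the Riemann
   sums D * sum_k |g (x - N + k D)|^p, so it suffices to treat finitely many nodes t_k.
   With w_k = Af(t_k), test A against h(y) = sum_k conj(w_k) |w_k|^(p-2) f(y + t_k):
   translation invariance and linearity give Ah(0) = sum_k |w_k|^p =: S, while Hoelder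
   gives |h(y)| <= S^(1-1/p) (sum_k |f(y + t_k)|^p)^(1/p).  The sup-norm bound for A
   then yields S <= a^p sup_y sum_k |f(y + t_k)|^p, and the claim follows in the limit. *)

Lemma powr_pos u e : 0 < u -> powr u e = Rpower u e.
Proof. intros Hu. unfold powr. destruct (Req_EM_T u 0); [lra | reflexivity]. Qed.

Lemma powr_0 e : powr 0 e = 0.
Proof. unfold powr. destruct (Req_EM_T 0 0); [reflexivity | lra]. Qed.

Lemma powr_gt0 u e : 0 < u -> 0 < powr u e.
Proof. intros Hu. rewrite powr_pos by exact Hu. apply exp_pos. Qed.

Lemma powr_ge0 u e : 0 <= powr u e.
Proof.
  unfold powr. destruct (Req_EM_T u 0); [lra | left; apply exp_pos].
Qed.

Lemma powr_1 u : 0 <= u -> powr u 1 = u.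
Proof.
  intros [Hu | <-]; [rewrite powr_pos by exact Hu; apply Rpower_1 | apply powr_0]; lra.
Qed.

Lemma powr_plus u e1 e2 : 0 < u -> powr u (e1 + e2) = powr u e1 * powr u e2.
Proof. intros Hu. rewrite !powr_pos by exact Hu. apply Rpower_plus. Qed.

Lemma powr_succ u e : 0 <= u -> powr u e * u = powr u (e + 1).
Proof.
  intros [Hu | <-]; [| rewrite !powr_0; ring].
  rewrite powr_plus, powr_1 by lra. reflexivity.
Qed.

Lemma powr_powr u e1 e2 : 0 <= u -> powr (powr u e1) e2 = powr u (e1 * e2).
Proof.
  intros [Hu | <-]; [| rewrite !powr_0; reflexivity].
  rewrite powr_pos by exact (powr_gt0 u e1 Hu).
  rewrite !powr_pos by exact Hu. apply Rpower_mult.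
Qed.

Lemma powr_mult u v e : 0 <= u -> 0 <= v -> powr (u * v) e = powr u e * powr v e.
Proof.
  intros [Hu | <-] [Hv | <-]; try (rewrite ?Rmult_0_l, ?Rmult_0_r, !powr_0; ring).
  rewrite !powr_pos by (try apply Rmult_lt_0_compat; assumption).
  symmetry. apply Rpower_mult_distr; assumption.
Qed.

Lemma powr_div u v e : 0 <= u -> 0 < v -> powr (u / v) e = powr u e / powr v e.
Proof.
  intros Hu Hv. unfold Rdiv.
  rewrite powr_mult by (try exact Hu; left; apply Rinv_0_lt_compat, Hv).
  f_equal. rewrite !powr_pos by (try apply Rinv_0_lt_compat; exact Hv).
  unfold Rpower. rewrite ln_Rinv by exact Hv. rewrite <- exp_Ropp. f_equal. ring.
Qed.

Lemma powr_le u v e : 0 <= e -> 0 <= u <= v -> powr u e <= powr v e.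
Proof.
  intros He [[Hu | <-] Huv]; [| rewrite powr_0; apply powr_ge0].
  rewrite !powr_pos by lra. apply Rle_Rpower_l; lra.
Qed.

Lemma powr_inv_powr u p : 0 < p -> 0 <= u -> powr (powr u p) (1 / p) = u.
Proof.
  intros Hp Hu. rewrite powr_powr by exact Hu.
  replace (p * (1 / p)) with 1 by (field; lra). apply powr_1, Hu.
Qed.

Lemma powr_powr_inv u p : 0 < p -> 0 <= u -> powr (powr u (1 / p)) p = u.
Proof.
  intros Hp Hu. rewrite powr_powr by exact Hu.
  replace (1 / p * p) with 1 by (field; lra). apply powr_1, Hu.
Qed.

Lemma exp_convex th u v : 0 <= th <= 1 ->
  exp (th * u + (1 - th) * v) <= th * exp u + (1 - th) * exp v.
Proof.
  intros Hth. set (m := th * u + (1 - th) * v).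
  assert (Hu : exp m * (1 + (u - m)) <= exp u).
  { replace (exp u) with (exp m * exp (u - m)) by (rewrite <- exp_plus; f_equal; ring).
    apply Rmult_le_compat_l; [left; apply exp_pos | apply exp_ineq1_le]. }
  assert (Hv : exp m * (1 + (v - m)) <= exp v).
  { replace (exp v) with (exp m * exp (v - m)) by (rewrite <- exp_plus; f_equal; ring).
    apply Rmult_le_compat_l; [left; apply exp_pos | apply exp_ineq1_le]. }
  assert (Hm : th * (exp m * (1 + (u - m))) + (1 - th) * (exp m * (1 + (v - m))) = exp m)
    by (unfold m; ring).
  nra.
Qed.

Lemma young p x y : 1 <= p -> 0 <= x -> 0 <= y ->
  powr x (p - 1) * y <= (p - 1) / p * powr x p + / p * powr y p.
Proof.
  intros Hp Hx Hy. set (th := (p - 1) / p).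
  assert (Hth : 0 <= th <= 1).
  { unfold th. split; [apply Rmult_le_pos; [lra | left; apply Rinv_0_lt_compat; lra]
                      | apply (Rdiv_le_1 (p - 1) p); lra]. }
  replace (/ p) with (1 - th) by (unfold th; field; lra).
  destruct Hx as [Hx | <-]; [destruct Hy as [Hy | <-] |].
  - rewrite !powr_pos by assumption. unfold Rpower.
    rewrite <- (exp_ln y) at 1 by exact Hy. rewrite <- exp_plus.
    replace ((p - 1) * ln x + ln y) with (th * (p * ln x) + (1 - th) * (p * ln y))
      by (unfold th; field; lra).
    apply exp_convex, Hth.
  - pose proof (powr_ge0 x p). pose proof (powr_ge0 0 p). nra.
  - rewrite !powr_0. pose proof (powr_ge0 y p). nra.
Qed.

Fixpoint rsum (g : nat -> R) (n : nat) : R :=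
  match n with O => 0 | S m => rsum g m + g m end.

Lemma rsum_le g h n : (forall k, (k < n)%nat -> g k <= h k) -> rsum g n <= rsum h n.
Proof.
  induction n as [| n IH]; simpl; intros H; [lra |].
  assert (g n <= h n) by (apply H; lia).
  assert (rsum g n <= rsum h n) by (apply IH; intros; apply H; lia). lra.
Qed.

Lemma rsum_ext g h n : (forall k, g k = h k) -> rsum g n = rsum h n.
Proof. intros H. induction n as [| n IH]; simpl; [| rewrite IH, H]; reflexivity. Qed.

Lemma rsum_scal c g n : rsum (fun k => c * g k) n = c * rsum g n.
Proof. induction n as [| n IH]; simpl; [| rewrite IH]; ring. Qed.

Lemma rsum_plus g h n : rsum (fun k => g k + h k) n = rsum g n + rsum h n.
Proof. induction n as [| n IH]; simpl; [| rewrite IH]; ring. Qed.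

Lemma rsum_const c n : rsum (fun _ => c) n = INR n * c.
Proof. induction n as [| n IH]; [simpl; ring | rewrite S_INR; simpl; rewrite IH; ring]. Qed.

Lemma Rabs_rsum_minus_le g h n :
  Rabs (rsum g n - rsum h n) <= rsum (fun k => Rabs (g k - h k)) n.
Proof.
  induction n as [| n IH]; simpl; [rewrite Rminus_0_r, Rabs_R0; lra |].
  replace (rsum g n + g n - (rsum h n + h n)) with ((rsum g n - rsum h n) + (g n - h n))
    by ring.
  eapply Rle_trans; [apply Rabs_triang | lra].
Qed.

Lemma holder_rsum p n r q B : 1 <= p ->
  (forall k, 0 <= r k) -> (forall k, 0 <= q k) ->
  0 < rsum (fun k => powr (r k) p) n -> 0 < B ->
  rsum (fun k => powr (q k) p) n <= B ->
  rsum (fun k => powr (r k) (p - 1) * q k) n <=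
    powr (rsum (fun k => powr (r k) p) n) ((p - 1) / p) * powr B (1 / p).
Proof.
  intros Hp Hr Hq HS HB Hsum. set (S := rsum (fun k => powr (r k) p) n) in *.
  set (X := powr S (1 / p)). set (Y := powr B (1 / p)).
  assert (HX : 0 < X) by apply powr_gt0, HS.
  assert (HY : 0 < Y) by apply powr_gt0, HB.
  assert (HXp : powr X p = S) by (apply powr_powr_inv; lra).
  assert (HYp : powr Y p = B) by (apply powr_powr_inv; lra).
  assert (HXp1 : 0 < powr X (p - 1)) by apply powr_gt0, HX.
  set (K := powr X (p - 1) * Y).
  assert (HK : 0 < K) by (apply Rmult_lt_0_compat; assumption).
  assert (Hpt : forall k, powr (r k) (p - 1) * q k <=
            K * ((p - 1) / p / S) * powr (r k) p + K * (/ p / B) * powr (q k) p).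
  { intro k.
    pose proof (young p (r k / X) (q k / Y) Hp
                  (Rdiv_le_0_compat _ _ (Hr k) HX) (Rdiv_le_0_compat _ _ (Hq k) HY)) as Hy.
    rewrite !powr_div, HXp, HYp in Hy by (auto; lra).
    replace (powr (r k) (p - 1) * q k)
      with (K * (powr (r k) (p - 1) / powr X (p - 1) * (q k / Y))) by (unfold K; field; lra).
    eapply Rle_trans; [apply Rmult_le_compat_l; [lra | exact Hy] |].
    right. field. lra. }
  eapply Rle_trans; [apply rsum_le; intros k _; apply Hpt |].
  rewrite rsum_plus, !rsum_scal. fold S.
  replace (powr S ((p - 1) / p) * Y) with K.
  2: { unfold K, X. rewrite powr_powr by lra. f_equal. f_equal. field. lra. }
  assert (K * (/ p / B) * rsum (fun k => powr (q k) p) n <= K * (/ p / B) * B).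
  { apply Rmult_le_compat_l; [| exact Hsum].
    apply Rmult_le_pos; [lra |]. apply Rdiv_le_0_compat; [left; apply Rinv_0_lt_compat |]; lra. }
  assert (K * ((p - 1) / p / S) * S + K * (/ p / B) * B = K) by (field; lra).
  lra.
Qed.

Lemma powr_self_bound p a S B : 1 <= p -> 0 <= a -> 0 < S -> 0 < B ->
  S <= a * (powr S ((p - 1) / p) * powr B (1 / p)) -> S <= powr a p * B.
Proof.
  intros Hp Ha HS HB H.
  assert (HS1 : 0 < powr S ((p - 1) / p)) by apply powr_gt0, HS.
  assert (HSsplit : S = powr S ((p - 1) / p) * powr S (1 / p)).
  { rewrite <- powr_plus by exact HS. replace ((p - 1) / p + 1 / p) with 1 by (field; lra).
    symmetry; apply powr_1; lra. }
  assert (Hroot : powr S (1 / p) <= a * powr B (1 / p)).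
  { apply (Rmult_le_reg_l (powr S ((p - 1) / p))); [exact HS1 | nra]. }
  rewrite <- (powr_powr_inv S p), <- (powr_powr_inv B p), <- powr_mult by (apply powr_ge0 || lra).
  apply powr_le; [lra |]. split; [apply powr_ge0 | exact Hroot].
Qed.

Lemma Cnorm_Cmod z : Cnorm z = Cmod z.
Proof. unfold Cnorm, Cmod. f_equal. simpl. ring. Qed.

Lemma Cnorm_ge0 z : 0 <= Cnorm z.
Proof. apply sqrt_pos. Qed.

Lemma Cnorm_add z w : Cnorm (Cadd z w) <= Cnorm z + Cnorm w.
Proof. rewrite !Cnorm_Cmod. apply (Cmod_triangle z w). Qed.

Lemma Cnorm_mul z w : Cnorm (Cmul z w) = Cnorm z * Cnorm w.
Proof. rewrite !Cnorm_Cmod. apply (Cmod_mult z w). Qed.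

Lemma Cnorm_real x : Cnorm (x, 0) = Rabs x.
Proof. rewrite Cnorm_Cmod. apply Cmod_R. Qed.

Lemma Cadd_Csub z w : Cadd (Csub z w) w = z.
Proof. destruct z, w. unfold Cadd, Csub. simpl. f_equal; ring. Qed.

Lemma Cnorm_Csub_sym z w : Cnorm (Csub z w) = Cnorm (Csub w z).
Proof. unfold Cnorm, Csub. simpl. f_equal. ring. Qed.

Lemma Cnorm_sub_ge z w : Rabs (Cnorm z - Cnorm w) <= Cnorm (Csub z w).
Proof.
  assert (Hz : Cnorm z <= Cnorm (Csub z w) + Cnorm w).
  { rewrite <- (Cadd_Csub z w) at 1. apply Cnorm_add. }
  assert (Hw : Cnorm w <= Cnorm (Csub z w) + Cnorm z).
  { rewrite Cnorm_Csub_sym, <- (Cadd_Csub w z) at 1. apply Cnorm_add. }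
  apply Rabs_le. lra.
Qed.

(* For w = 0 this relies on powr 0 e = 0 even for negative exponents (p < 2). *)
Definition dual_weight (p : R) (w : Cplx) : Cplx :=
  (powr (Cnorm w) (p - 2) * fst w, - (powr (Cnorm w) (p - 2) * snd w)).

Lemma dual_weight_mul p w : Cmul (dual_weight p w) w = (powr (Cnorm w) p, 0).
Proof.
  assert (Hw2 : Cnorm w * Cnorm w = fst w * fst w + snd w * snd w)
    by (apply sqrt_sqrt; nra).
  unfold dual_weight, Cmul. simpl. f_equal; [| ring].
  replace p with (p - 2 + 1 + 1) at 3 by ring.
  rewrite <- !powr_succ by apply Cnorm_ge0.
  rewrite (Rmult_assoc _ (Cnorm w) (Cnorm w)), Hw2. ring.
Qed.

Lemma Cnorm_dual_weight p w : Cnorm (dual_weight p w) = powr (Cnorm w) (p - 1).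
Proof.
  replace (dual_weight p w) with (Cmul (powr (Cnorm w) (p - 2), 0) (fst w, - snd w))
    by (unfold dual_weight, Cmul; simpl; f_equal; ring).
  rewrite Cnorm_mul, Cnorm_real, Rabs_pos_eq by apply powr_ge0.
  replace (Cnorm (fst w, - snd w)) with (Cnorm w) by (unfold Cnorm; simpl; f_equal; ring).
  replace (p - 1) with (p - 2 + 1) by ring. apply powr_succ, Cnorm_ge0.
Qed.

Fixpoint transl_comb (d : nat -> Cplx) (F : R -> Cplx) (t : nat -> R) (n : nat) (y : R)
  : Cplx :=
  match n with
  | O => C0
  | S m => Cadd (transl_comb d F t m y) (Cmul (d m) (F (y + t m)))
  end.

Lemma Cnorm_transl_comb_le d F t n y :
  Cnorm (transl_comb d F t n y) <= rsum (fun k => Cnorm (d k) * Cnorm (F (y + t k))) n.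
Proof.
  induction n as [| n IH]; simpl.
  - right. unfold Cnorm, C0. simpl. rewrite Rmult_0_l, Rplus_0_l. apply sqrt_0.
  - eapply Rle_trans; [apply Cnorm_add |]. rewrite Cnorm_mul. lra.
Qed.

Lemma transl_comb_dual_weight p G t n :
  transl_comb (fun k => dual_weight p (G (t k))) G t n 0 =
    (rsum (fun k => powr (Cnorm (G (t k))) p) n, 0).
Proof.
  induction n as [| n IH]; simpl; [reflexivity |].
  rewrite IH, Rplus_0_l, dual_weight_mul. unfold Cadd. simpl. f_equal. ring.
Qed.

Lemma powr_sub_le_lipschitz p M u v : 1 <= p -> 0 <= u <= v -> v <= M ->
  powr v p - powr u p <= p * powr M (p - 1) * (v - u).
Proof.
  intros Hp [Hu Huv] HvM.
  destruct (Rle_lt_or_eq_dec _ _ Huv) as [Hlt | <-]; [| lra].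
  assert (HMv : powr v (p - 1) <= powr M (p - 1)) by (apply powr_le; lra).
  destruct Hu as [Hu | <-].
  - rewrite !powr_pos in * by lra.
    destruct (MVT_cor2 (fun x => Rpower x p) (fun x => p * Rpower x (p - 1)) u v Hlt)
      as [c [Hc Hcuv]].
    { intros c Hc. apply derivable_pt_lim_power. lra. }
    rewrite Hc. apply Rmult_le_compat_r; [lra |]. apply Rmult_le_compat_l; [lra |].
    apply Rle_trans with (Rpower v (p - 1)); [apply Rle_Rpower_l |]; lra.
  - rewrite powr_0, !Rminus_0_r.
    replace p with (p - 1 + 1) at 1 by ring. rewrite <- powr_succ by lra.
    assert (0 <= powr M (p - 1)) by apply powr_ge0.
    assert (powr v (p - 1) * v <= powr M (p - 1) * v) by (apply Rmult_le_compat_r; lra).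
    assert (0 <= (p - 1) * powr M (p - 1) * v) by (repeat apply Rmult_le_pos; lra).
    lra.
Qed.

Lemma powr_lipschitz p M u v : 1 <= p -> 0 <= u <= M -> 0 <= v <= M ->
  Rabs (powr u p - powr v p) <= p * powr M (p - 1) * Rabs (u - v).
Proof.
  intros Hp Hu Hv. destruct (Rle_or_lt u v) as [Huv | Hvu].
  - assert (powr u p <= powr v p) by (apply powr_le; lra).
    rewrite Rabs_minus_sym, (Rabs_minus_sym u), !Rabs_pos_eq by lra.
    apply powr_sub_le_lipschitz; lra.
  - assert (powr v p <= powr u p) by (apply powr_le; lra).
    rewrite !Rabs_pos_eq by lra.
    apply powr_sub_le_lipschitz; lra.
Qed.

Definition unif_cont_real (g : R -> R) : Prop :=
  forall eps, 0 < eps -> exists delta, 0 < delta /\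
    forall s t, Rabs (s - t) < delta -> Rabs (g s - g t) < eps.

Lemma unif_cont_powr_Cnorm p F : 1 <= p -> bdd_fun F -> unif_cont F ->
  unif_cont_real (fun t => powr (Cnorm (F t)) p).
Proof.
  intros Hp [M0 HM0] HF eps Heps.
  set (M := Rmax M0 1).
  assert (HFM : forall x, 0 <= Cnorm (F x) <= M).
  { intro x. split; [apply Cnorm_ge0 | eapply Rle_trans; [apply HM0 | apply Rmax_l]]. }
  set (L := p * powr M (p - 1)).
  assert (HL : 0 < L).
  { apply Rmult_lt_0_compat; [lra |]. apply powr_gt0. unfold M. pose proof (Rmax_r M0 1). lra. }
  destruct (HF (eps / L)) as [delta [Hdelta Hd]]; [apply Rdiv_lt_0_compat; assumption |].
  exists delta. split; [exact Hdelta |]. intros s t Hst.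
  eapply Rle_lt_trans; [apply powr_lipschitz; auto |]. fold L.
  replace eps with (L * (eps / L)) by (field; lra).
  apply Rmult_lt_compat_l; [exact HL |].
  eapply Rle_lt_trans; [apply Cnorm_sub_ge | apply Hd, Hst].
Qed.

Lemma unif_cont_real_ex_RInt g a b : unif_cont_real g -> ex_RInt g a b.
Proof.
  intros Hg. apply (ex_RInt_continuous (V := R_CompleteNormedModule)).
  intros x _. apply continuity_pt_filterlim. intros eps Heps.
  destruct (Hg eps Heps) as [delta [Hdelta Hd]].
  exists delta. split; [exact Hdelta |]. intros y [_ Hy]. apply Hd, Hy.
Qed.

Lemma RInt_total_eq g a b : unif_cont_real g -> RInt_total g a b = RInt g a b.
Proof.
  intros Hg. unfold RInt_total.
  destruct (excluded_middle_informative _) as [Hex | Hnot].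
  - symmetry. apply RInt_Reals.
  - exfalso. apply Hnot.
    exists (ex_RInt_Reals_0 _ _ _ (unif_cont_real_ex_RInt g a b Hg)). exact I.
Qed.

Lemma RInt_subdivision g c D m : unif_cont_real g ->
  RInt g c (c + INR m * D) = rsum (fun k => RInt g (c + INR k * D) (c + INR (S k) * D)) m.
Proof.
  intros Hg. induction m as [| m IH].
  - simpl. rewrite Rmult_0_l, Rplus_0_r. exact (RInt_point c g).
  - cbn [rsum]. rewrite <- IH.
    symmetry. apply (RInt_Chasles g); apply unif_cont_real_ex_RInt, Hg.
Qed.

Lemma RInt_left_endpoint_err g x D e : unif_cont_real g -> 0 <= D ->
  (forall t, x <= t <= x + D -> Rabs (g t - g x) <= e) ->
  Rabs (RInt g x (x + D) - D * g x) <= D * e.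
Proof.
  intros Hg HD He.
  replace (RInt g x (x + D) - D * g x) with (RInt (fun t => g t - g x) x (x + D)).
  2: { rewrite (RInt_minus g (fun _ => g x)), RInt_const;
         [| apply unif_cont_real_ex_RInt, Hg | apply ex_RInt_const].
       unfold minus, plus, opp, scal. simpl. unfold mult. simpl. ring. }
  replace D with (x + D - x) at 2 by ring.
  apply abs_RInt_le_const; [lra | | exact He].
  apply (ex_RInt_minus g (fun _ => g x)); [apply unif_cont_real_ex_RInt, Hg | apply ex_RInt_const].
Qed.

Lemma riemann_sum_unif g L : unif_cont_real g -> 0 < L -> forall eps, 0 < eps ->
  exists n0, (0 < n0)%nat /\ forall n, (n0 <= n)%nat -> forall c,
    Rabs (L / INR n * rsum (fun k => g (c + INR k * (L / INR n))) n - RInt g c (c + L))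
      <= eps.
Proof.
  intros Hg HL eps Heps.
  destruct (Hg (eps / L)) as [delta [Hdelta Hd]]; [apply Rdiv_lt_0_compat; assumption |].
  destruct (archimed_cor1 (delta / L)) as [n0 [Hn0 Hn0pos]];
    [apply Rdiv_lt_0_compat; assumption |].
  exists n0. split; [exact Hn0pos |]. intros n Hn c.
  assert (Hn0R : 0 < INR n0) by (apply lt_0_INR; exact Hn0pos).
  assert (HnR : INR n0 <= INR n) by (apply le_INR; exact Hn).
  set (D := L / INR n).
  assert (HD : 0 < D) by (apply Rdiv_lt_0_compat; lra).
  assert (HDdelta : D < delta).
  { apply Rle_lt_trans with (L * / INR n0).
    - apply Rmult_le_compat_l; [lra |]. apply Rinv_le_contravar; lra.
    - replace delta with (L * (delta / L)) by (field; lra). apply Rmult_lt_compat_l; lra. }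
  replace (c + L) with (c + INR n * D) by (unfold D; field; lra).
  rewrite RInt_subdivision, <- rsum_scal by exact Hg.
  eapply Rle_trans; [apply Rabs_rsum_minus_le |].
  eapply Rle_trans; [apply (rsum_le _ (fun _ => D * (eps / L))) |].
  - intros k _. rewrite Rabs_minus_sym.
    replace (c + INR (S k) * D) with (c + INR k * D + D) by (rewrite S_INR; ring).
    apply RInt_left_endpoint_err; [exact Hg | lra |].
    intros t Ht. left. apply Hd. rewrite Rabs_pos_eq; lra.
  - rewrite rsum_const. right. unfold D. field. lra.
Qed.

Section TranslationInvariantOperator.

Variables (E : (R -> Cplx) -> Prop)
  (E_bdd_uc : forall f, E f -> bdd_fun f /\ unif_cont f)
  (E_zero : E (fun _ => C0))
  (E_add : forall f g, E f -> E g -> E (fun t => Cadd (f t) (g t)))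
  (E_scal : forall (c : Cplx) f, E f -> E (fun t => Cmul c (f t)))
  (E_transl : forall f (t : R), E f -> E (fun x => f (x + t)))
  (A : (R -> Cplx) -> (R -> Cplx))
  (A_into : forall f, E f -> E (A f))
  (A_add : forall f g, E f -> E g ->
      forall x, A (fun t => Cadd (f t) (g t)) x = Cadd (A f x) (A g x))
  (A_scal : forall (c : Cplx) f, E f ->
      forall x, A (fun t => Cmul c (f t)) x = Cmul c (A f x))
  (a : R) (a_nonneg : 0 <= a)
  (A_bound : forall f, E f -> forall s s',
      is_sup_norm f s -> is_sup_norm (A f) s' -> s' <= a * s)
  (A_transl : forall f (t : R), E f ->
      forall x, A (fun y => f (y + t)) x = A f (x + t)).

Lemma E_transl_comb d F t n : E F -> E (transl_comb d F t n).
Proof.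
  intros HF. induction n as [| n IH]; [exact E_zero |].
  exact (E_add _ _ IH (E_scal (d n) _ (E_transl F (t n) HF))).
Qed.

Lemma A_zero x : A (fun _ => C0) x = C0.
Proof.
  assert (H0 : forall z, Cmul C0 z = C0) by (intro z; unfold Cmul, C0; simpl; f_equal; ring).
  pose proof (A_scal C0 (fun _ => C0) E_zero x) as H. rewrite !H0 in H. exact H.
Qed.

Lemma A_transl_comb d F t n : E F ->
  forall y, A (transl_comb d F t n) y = transl_comb d (A F) t n y.
Proof.
  intros HF. induction n as [| n IH]; intros y; [apply A_zero |].
  change (A (fun z => Cadd (transl_comb d F t n z) (Cmul (d n) (F (z + t n)))) y =
    Cadd (transl_comb d (A F) t n y) (Cmul (d n) (A F (y + t n)))).
  rewrite A_add, IH, A_scal, A_transl; try reflexivity; try assumption.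
  - apply E_transl, HF.
  - apply E_transl_comb, HF.
  - apply E_scal, E_transl, HF.
Qed.

Lemma sup_norm_exists F : E F -> exists s, is_sup_norm F s.
Proof.
  intros HF. destruct (E_bdd_uc F HF) as [[M HM] _].
  destruct (completeness (fun y => exists x, y = Cnorm (F x))) as [s Hs].
  - exists M. intros y [x ->]. apply HM.
  - exists (Cnorm (F 0)), 0. reflexivity.
  - exists s. exact Hs.
Qed.

Lemma A_pointwise_le h M : E h -> (forall y, Cnorm (h y) <= M) ->
  forall x, Cnorm (A h x) <= a * M.
Proof.
  intros Hh HM x.
  destruct (sup_norm_exists h Hh) as [s Hs].
  destruct (sup_norm_exists (A h) (A_into h Hh)) as [s' Hs'].
  assert (Hx : Cnorm (A h x) <= s') by (apply Hs'; exists x; reflexivity).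
  assert (HsM : s <= M) by (apply Hs; intros z [y ->]; apply HM).
  pose proof (A_bound h Hh s s' Hs Hs'). pose proof (Rmult_le_compat_l a s M a_nonneg HsM).
  lra.
Qed.

Variables (p : R) (hp : 1 <= p).

Lemma rsum_A_powr_le f n t B : E f -> 0 < B ->
  (forall y, rsum (fun k => powr (Cnorm (f (y + t k))) p) n <= B) ->
  rsum (fun k => powr (Cnorm (A f (t k))) p) n <= powr a p * B.
Proof.
  intros Hf HB HfB.
  set (S := rsum (fun k => powr (Cnorm (A f (t k))) p) n).
  destruct (Rle_or_lt S 0) as [HS | HS].
  { pose proof (powr_ge0 a p). nra. }
  set (h := transl_comb (fun k => dual_weight p (A f (t k))) f t n).
  assert (Hh : forall y, Cnorm (h y) <= powr S ((p - 1) / p) * powr B (1 / p)).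
  { intro y. eapply Rle_trans; [apply Cnorm_transl_comb_le |].
    rewrite (rsum_ext _ (fun k => powr (Cnorm (A f (t k))) (p - 1) * Cnorm (f (y + t k))))
      by (intro k; rewrite Cnorm_dual_weight; reflexivity).
    apply holder_rsum; auto; intro; apply Cnorm_ge0. }
  assert (HAh : Cnorm (A h 0) = S).
  { unfold h. rewrite A_transl_comb, transl_comb_dual_weight, Cnorm_real by exact Hf.
    apply Rabs_pos_eq. lra. }
  apply powr_self_bound; auto. rewrite <- HAh at 1.
  apply A_pointwise_le; [apply E_transl_comb, Hf | exact Hh].
Qed.

Lemma local_integral_le N f B : 0 < N -> E f -> 0 <= B ->
  (forall y, RInt (fun t => powr (Cnorm (f t)) p) (y - N) (y + N) <= B) ->
  forall x, RInt (fun t => powr (Cnorm (A f t)) p) (x - N) (x + N) <= powr a p * B.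
Proof.
  intros HN Hf HB Hloc x.
  assert (Uf : unif_cont_real (fun t => powr (Cnorm (f t)) p))
    by (destruct (E_bdd_uc f Hf); apply unif_cont_powr_Cnorm; assumption).
  assert (UA : unif_cont_real (fun t => powr (Cnorm (A f t)) p))
    by (destruct (E_bdd_uc (A f) (A_into f Hf)); apply unif_cont_powr_Cnorm; assumption).
  apply Rle_plus_epsilon. intros eps Heps.
  pose proof (powr_ge0 a p) as Hap.
  set (e := eps / (powr a p + 1)).
  assert (He : 0 < e) by (apply Rdiv_lt_0_compat; lra).
  assert (Heps_e : e * (powr a p + 1) = eps) by (unfold e; field; lra).
  destruct (riemann_sum_unif _ (2 * N) Uf ltac:(lra) e He) as [nf [Hnf Rf]].
  destruct (riemann_sum_unif _ (2 * N) UA ltac:(lra) e He) as [nA [_ RA]].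
  set (n := Nat.max nf nA).
  specialize (Rf n ltac:(lia)). specialize (RA n ltac:(lia) (x - N)).
  set (D := 2 * N / INR n) in *.
  assert (HD : 0 < D) by (apply Rdiv_lt_0_compat; [lra | apply lt_0_INR; lia]).
  assert (Hnodes : forall y, rsum (fun k => powr (Cnorm (f (y + (x - N + INR k * D)))) p) n
                             <= (B + e) / D).
  { intro y. specialize (Rf (y + x - N)). apply Rabs_le_between in Rf.
    replace (y + x - N + 2 * N) with (y + x + N) in Rf by ring.
    rewrite (rsum_ext _ (fun k => powr (Cnorm (f (y + x - N + INR k * D))) p))
      by (intro k; do 3 f_equal; ring).
    specialize (Hloc (y + x)).
    apply (Rmult_le_reg_l D); [exact HD |]. unfold Rdiv. field_simplify; lra. }
  pose proof (rsum_A_powr_le f n (fun k => x - N + INR k * D) ((B + e) / D) Hf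
                ltac:(apply Rdiv_lt_0_compat; lra) Hnodes) as Hkey.
  apply Rabs_le_between in RA. replace (x - N + 2 * N) with (x + N) in RA by ring.
  assert (D * rsum (fun k => powr (Cnorm (A f (x - N + INR k * D))) p) n
          <= powr a p * (B + e)).
  { replace (powr a p * (B + e)) with (D * (powr a p * ((B + e) / D))) by (field; lra).
    apply Rmult_le_compat_l; [lra | exact Hkey]. }
  lra.
Qed.

End TranslationInvariantOperator.

Lemma RInt_unif_cont_ge0 g a b : unif_cont_real g -> a <= b -> (forall t, 0 <= g t) ->
  0 <= RInt g a b.
Proof.
  intros Hg Hab Hpos. apply RInt_ge_0; [exact Hab | apply unif_cont_real_ex_RInt, Hg |].
  intros t _. apply Hpos.
Qed.

Lemma loc_pnorm_RInt p N F x : unif_cont_real (fun t => powr (Cnorm (F t)) p) ->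
  loc_pnorm p N F x = powr (RInt (fun t => powr (Cnorm (F t)) p) (x - N) (x + N)) (1 / p).
Proof. intros HF. unfold loc_pnorm. rewrite RInt_total_eq by exact HF. reflexivity. Qed.

Lemma is_pN_norm_ge0 p N F s : is_pN_norm p N F s -> 0 <= s.
Proof.
  intros Hs. apply Rle_trans with (loc_pnorm p N F 0); [apply powr_ge0 |].
  apply Hs. exists 0. reflexivity.
Qed.

Lemma is_pN_norm_RInt_le p N F s : 0 < p -> 0 < N ->
  unif_cont_real (fun t => powr (Cnorm (F t)) p) -> is_pN_norm p N F s ->
  forall y, RInt (fun t => powr (Cnorm (F t)) p) (y - N) (y + N) <= powr s p.
Proof.
  intros Hp HN HF Hs y.
  assert (Hy : loc_pnorm p N F y <= s) by (apply Hs; exists y; reflexivity).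
  rewrite loc_pnorm_RInt in Hy by exact HF.
  rewrite <- (powr_powr_inv (RInt _ _ _) p) by
    (try apply RInt_unif_cont_ge0; try intro; try apply powr_ge0; auto; lra).
  apply powr_le; [lra |]. split; [apply powr_ge0 | exact Hy].
Qed.

Lemma is_pN_norm_le_of_RInt_le p N F s K : 0 < p -> 0 < N ->
  unif_cont_real (fun t => powr (Cnorm (F t)) p) ->
  (forall x, RInt (fun t => powr (Cnorm (F t)) p) (x - N) (x + N) <= K) ->
  is_pN_norm p N F s -> s <= powr K (1 / p).
Proof.
  intros Hp HN HF HK Hs. apply Hs. intros z [x ->].
  rewrite loc_pnorm_RInt by exact HF.
  apply powr_le; [unfold Rdiv; rewrite Rmult_1_l; left; apply Rinv_0_lt_compat, Hp |].
  split; [| apply HK]. apply RInt_unif_cont_ge0; [exact HF | lra | intro; apply powr_ge0].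
Qed.

Theorem theorem1p2p7
  (E : (R -> Cplx) -> Prop)
  (E_bdd_uc : forall f, E f -> bdd_fun f /\ unif_cont f)
  (E_zero : E (fun _ => C0))
  (E_add : forall f g, E f -> E g -> E (fun t => Cadd (f t) (g t)))
  (E_scal : forall (c : Cplx) f, E f -> E (fun t => Cmul c (f t)))
  (E_closed : forall (fn : nat -> R -> Cplx) (g : R -> Cplx),
      (forall n, E (fn n)) -> unif_conv fn g -> E g)
  (E_transl : forall f (t : R), E f -> E (fun x => f (x + t)))
  (A : (R -> Cplx) -> (R -> Cplx))
  (A_into : forall f, E f -> E (A f))
  (A_add : forall f g, E f -> E g ->
      forall x, A (fun t => Cadd (f t) (g t)) x = Cadd (A f x) (A g x))
  (A_scal : forall (c : Cplx) f, E f ->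
      forall x, A (fun t => Cmul c (f t)) x = Cmul c (A f x))
  (a : R) (a_nonneg : 0 <= a)
  (A_bound : forall f, E f -> forall s s',
      is_sup_norm f s -> is_sup_norm (A f) s' -> s' <= a * s)
  (A_transl : forall f (t : R), E f ->
      forall x, A (fun y => f (y + t)) x = A f (x + t))
  (p N : R) (hp : 1 <= p) (hN : 0 < N)
  (f : R -> Cplx) (hf : E f)
  (s s' : R) (hs : is_pN_norm p N f s) (hs' : is_pN_norm p N (A f) s') :
  s' <= a * s.
Proof.
  assert (Uf : unif_cont_real (fun t => powr (Cnorm (f t)) p))
    by (destruct (E_bdd_uc f hf); apply unif_cont_powr_Cnorm; assumption).
  assert (UA : unif_cont_real (fun t => powr (Cnorm (A f t)) p))
    by (destruct (E_bdd_uc (A f) (A_into f hf)); apply unif_cont_powr_Cnorm; assumption).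
  assert (Hs0 : 0 <= s) by exact (is_pN_norm_ge0 p N f s hs).
  pose proof (is_pN_norm_RInt_le p N f s ltac:(lra) hN Uf hs) as Hf_loc.
  pose proof (local_integral_le E E_bdd_uc E_zero E_add E_scal E_transl A A_into A_add A_scal
                a a_nonneg A_bound A_transl p hp N f (powr s p) hN hf (powr_ge0 s p) Hf_loc)
    as HAf_loc.
  eapply Rle_trans;
    [exact (is_pN_norm_le_of_RInt_le p N (A f) s' _ ltac:(lra) hN UA HAf_loc hs') |].
  right. rewrite powr_mult, !powr_inv_powr by (lra || apply powr_ge0). reflexivity.
Qed.
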